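(* Let $\theta>0$, $n\ge2$, and let $K$ be the size of the subtree rooted at vertex $1$ in the Hoppe tree with $n$ vertices (with the law $\Pr(K=m)=\binom{n-2}{m-1}\theta^{(n-m-1)}(m-1)!/(\theta+1)^{(n-2)}$, $1\le m\le n-1$). Then jointly $$\begin{pmatrix}W_n'\\ T_n'\end{pmatrix}\overset{d}{=}\begin{pmatrix}1&K\\0&1\end{pmatrix}\begin{pmatrix}W_{n-K}'\\ T_{n-K}'\end{pmatrix}+\begin{pmatrix}1&n-K\\0&1\end{pmatrix}\begin{pmatrix}W_K\\ T_K\end{pmatrix}+\begin{pmatrix}K(n-K)\\ K\end{pmatrix},$$ where $(W_j',T_j')_{j\ge1}$ (Hoppe tree with parameter $\theta$), $(W_j,T_j)_{j\ge1}$ (random recursive tree) and $K$ are independent.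
   Context: Let $(J_k)_{k\ge1}$ be independent with $\Pr(J_k=0)=\frac{\theta}{\theta+k-1}$ and $\Pr(J_k=i)=\frac{1}{\theta+k-1}$ for $i\in\{1,\dots,k-1\}$. The Hoppe tree with $n$ vertices has vertex set $\{0,\dots,n-1\}$, root $0$, parent of $k\ge1$ equal to $J_k$; for $\theta=1$ it is the random recursive tree. $T_j$ is the total length (sum of depths of all vertices) and $W_j$ the Wiener index (sum of graph distances over unordered pairs of distinct vertices) of the tree with $j$ vertices; primes denote the Hoppe tree with parameter $\theta$, unprimed the random recursive tree. $x^{(k)}=x(x+1)\cdots(x+k-1)$ is the rising factorial. *)

From HB Require Import structures.
From mathcomp Require Import all_boot all_order all_algebra.
Set Implicit Arguments. Unset Strict Implicit. Unset Printing Implicit Defensive.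
Import Order.TTheory GRing.Theory Num.Theory.

(* A tree on vertices {0,...,N-1} (root 0) is encoded by its parent sequence
   s = [:: J_1; ...; J_(N-1)], with J_k < k (the parent of vertex k). *)

Fixpoint trees_aux (k : nat) : seq (seq nat) :=
  match k with
  | 0 => [:: [::]]
  | k'.+1 => flatten [seq [seq rcons s j | j <- iota 0 k'.+1] | s <- trees_aux k']
  end.

Definition trees (n : nat) : seq (seq nat) := trees_aux n.-1.

Definition parent (s : seq nat) (v : nat) : nat := nth 0 s v.-1.

Fixpoint anc_f (fuel : nat) (s : seq nat) (v : nat) : seq nat :=
  match fuel with
  | 0 => [:: v]
  | f.+1 => if v is 0 then [:: 0] else v :: anc_f f s (parent s v)
  end.
Definition anc (s : seq nat) (v : nat) : seq nat := anc_f v s v.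

Definition depth (s : seq nat) (v : nat) : nat := (size (anc s v)).-1.

(* graph distance in the tree: the path u -- v uses exactly the edges
   (x, parent x) for x an ancestor of exactly one of u, v *)
Definition dist (s : seq nat) (u v : nat) : nat :=
  count (fun x => x \notin anc s v) (anc s u) + count (fun x => x \notin anc s u) (anc s v).

Definition nverts (s : seq nat) : nat := (size s).+1.

Definition Tlen (s : seq nat) : nat := \sum_(0 <= v < nverts s) depth s v.

Definition Wien (s : seq nat) : nat :=
  \sum_(0 <= v < nverts s) \sum_(0 <= u < v) dist s u v.

Definition subsize1 (s : seq nat) : nat :=
  count (fun v => 1 \in anc s v) (iota 0 (nverts s)).

(* probability of the parent sequence s under the Hoppe tree law with
   parameter theta: Pr(J_k = 0) = theta/(theta+k-1), Pr(J_k = i) = 1/(theta+k-1) *)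
Definition weight (R : realFieldType) (theta : R) (s : seq nat) : R :=
  \prod_(i < size s) (if nth 0 s i == 0 then theta / (theta + i%:R) else 1 / (theta + i%:R)).

Definition lawWT (R : realFieldType) (theta : R) (n w t : nat) : R :=
  \sum_(s <- trees n) weight theta s * ((Wien s == w) && (Tlen s == t))%:R.

Definition lawK (R : realFieldType) (theta : R) (n m : nat) : R :=
  \sum_(s <- trees n) weight theta s * (subsize1 s == m)%:R.

From HB Require Import structures.
From mathcomp Require Import all_boot all_order all_algebra.
From mathcomp Require Import zify ring.
Import Order.TTheory GRing.Theory Num.Theory.

(* Cutting the edge {0, 1} splits a tree s on n >= 2 vertices into the part
   containing the root and the subtree of vertex 1.  Marking every vertex by
   whether it lies in the subtree of 1 and relabelling each part increasingly
   by the rank of its vertices, [split_tree] computes the marks bs and the two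
   parts s1, s2 vertex by vertex; [splits] is the invariant it maintains:
   depths in s are depths in s1, or depths in s2 plus one, and two vertices
   are at the distance they have in their common part, or at the sum of their
   depths.  Summing over vertices and over pairs of vertices yields T(s) and
   W(s) in terms of s1, s2 and K = #true marks ([Tlen_splits], [Wien_splits]).

   When a Hoppe tree grows by one vertex, the new vertex joins the subtree of 1
   with probability K / (theta + N - 1), and given this choice s1 grows as a
   Hoppe tree and s2 as a random recursive tree ([sum_split_step]).  Hence the
   Hoppe law is the mixture, over the law [mark_law] of the marks, of the
   product of a Hoppe law and an independent random recursive tree law
   ([split_sum]).  Regrouping this mixture by the value of K gives the theorem. *)

Definition tree_seq (s : seq nat) : Prop := forall i, i < size s -> nth 0 s i <= i.

Lemma tree_seq_rcons s j : tree_seq s -> j <= size s -> tree_seq (rcons s j).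
Proof.
move=> hs hj i; rewrite size_rcons ltnS nth_rcons => hi.
by case: (ltngtP i (size s)) hi => // [/hs | ->].
Qed.

Lemma size_anc_f_gt0 s f v : 0 < size (anc_f f s v).
Proof. by case: f => [|f] //=; case: v. Qed.

Lemma dist_refl s u : dist s u u = 0.
Proof.
rewrite /dist addnn; apply/eqP; rewrite double_eq0 eqn0Ngt -has_count.
by apply/hasPn => x /= ->.
Qed.

Lemma dist_sym s u v : dist s u v = dist s v u.
Proof. by rewrite /dist addnC. Qed.

Section ParentSequence.
Variable s : seq nat.
Hypothesis hs : tree_seq s.

Lemma parent_lt v : 0 < v -> parent s v < v.
Proof.
rewrite /parent; case: v => // v _ /=.
by case: (ltnP v (size s)) => [/hs|h]; [|rewrite nth_default].
Qed.

Lemma anc_f_fuel f g v : v <= f -> v <= g -> anc_f f s v = anc_f g s v.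
Proof.
elim: f g v => [|f IH] [|g] [|v] //= hf hg; congr (_ :: _).
by apply: IH; have := @parent_lt v.+1 isT; lia.
Qed.

Lemma mem_anc_le f v x : x \in anc_f f s v -> x <= v.
Proof.
elim: f v => [|f IH] [|v] /=; rewrite ?inE; try by move/eqP ->.
case/orP=> [/eqP -> //|/IH]; have := @parent_lt v.+1 isT; lia.
Qed.

Lemma anc_f_rcons_old j f v : v <= size s -> anc_f f (rcons s j) v = anc_f f s v.
Proof.
elim: f v => [|f IH] [|u] //= hu.
have hp : parent (rcons s j) u.+1 = parent s u.+1 by rewrite /parent /= nth_rcons hu.
by rewrite hp IH //; have := @parent_lt u.+1 isT; lia.
Qed.

Lemma anc_rcons_old j v : v <= size s -> anc (rcons s j) v = anc s v.
Proof. exact: anc_f_rcons_old. Qed.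

Lemma depth_rcons_old j v : v <= size s -> depth (rcons s j) v = depth s v.
Proof. by move=> hv; rewrite /depth anc_rcons_old. Qed.

Lemma dist_rcons_old j u v : u <= size s -> v <= size s ->
  dist (rcons s j) u v = dist s u v.
Proof. by move=> hu hv; rewrite /dist !anc_rcons_old. Qed.

Lemma anc_rcons_new j : j <= size s -> anc (rcons s j) (size s).+1 = (size s).+1 :: anc s j.
Proof.
move=> hj; rewrite /anc /=.
have -> : parent (rcons s j) (size s).+1 = j by rewrite /parent /= nth_rcons ltnn eqxx.
by rewrite anc_f_rcons_old // (@anc_f_fuel _ j).
Qed.

Lemma depth_rcons_new j : j <= size s -> depth (rcons s j) (size s).+1 = (depth s j).+1.
Proof. by move=> hj; rewrite /depth anc_rcons_new //= prednK // size_anc_f_gt0. Qed.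

Lemma dist_rcons_new j u : j <= size s -> u <= size s ->
  dist (rcons s j) u (size s).+1 = (dist s u j).+1.
Proof.
move=> hj hu; rewrite /dist (anc_rcons_old _ _ hu) anc_rcons_new //= -addnS.
have /negPf -> : (size s).+1 \notin anc s u by apply/negP => /mem_anc_le; lia.
congr (_ + _); apply: eq_in_count => x /mem_anc_le hx /=.
by rewrite inE negb_or; case: eqP => //; lia.
Qed.

End ParentSequence.

Lemma mem_trees_aux {k s} : s \in trees_aux k -> size s = k /\ tree_seq s.
Proof.
elim: k s => [|k IH] s; first by rewrite inE => /eqP ->; split => // i.
case/flattenP=> _ /mapP [s0 /IH [h1 h2] ->] /mapP [j]; rewrite mem_iota add0n => /andP [_ hj] ->.
by rewrite size_rcons h1; split => //; apply: tree_seq_rcons; rewrite ?h1.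
Qed.

Lemma trees_aux_rcons {k s} : s \in trees_aux k.+1 ->
  exists s0 j, [/\ s0 \in trees_aux k, j <= k & s = rcons s0 j].
Proof.
case/flattenP=> _ /mapP [s0 hs0 ->] /mapP [j]; rewrite mem_iota add0n => /andP [_ hj] ->.
by exists s0, j.
Qed.

Lemma big_trees_aux (T : Type) (idx : T) (op : Monoid.com_law idx) k (F : seq nat -> T) :
  \big[op/idx]_(s <- trees_aux k.+1) F s =
  \big[op/idx]_(s <- trees_aux k) \big[op/idx]_(0 <= j < k.+1) F (rcons s j).
Proof.
change (trees_aux k.+1) with
  (flatten [seq [seq rcons s j | j <- iota 0 k.+1] | s <- trees_aux k]).
rewrite big_flatten big_map /index_iota subn0.
by apply: eq_bigr => s _; rewrite big_map.
Qed.

(* Marks: [nth false bs u] tells whether vertex u lies in the subtree of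
   vertex 1, and [rank bs u] is the label of u in its part. *)
Definition rank (bs : seq bool) (u : nat) : nat := count_mem (nth false bs u) (take u bs).

Lemma count_rcons (T : eqType) (a : pred T) s x : count a (rcons s x) = count a s + a x.
Proof. by rewrite -cats1 count_cat /= addn0. Qed.

Lemma count_marks (bs : seq bool) : count_mem false bs + count_mem true bs = size bs.
Proof. by elim: bs => [|[] bs IH] //=; rewrite -IH ?addnS. Qed.

Lemma rank_lt bs u : u < size bs -> rank bs u < count_mem (nth false bs u) bs.
Proof.
move=> hu; rewrite /rank; set c := nth false bs u.
by rewrite -{2}(cat_take_drop u bs) count_cat (drop_nth false hu) /= eqxx; lia.
Qed.

(* The root is marked [false]: it is the only vertex of rank 0 marked [false],
   and no vertex marked [true] is the root. *)
Lemma eq0_rank bs j : nth false bs 0 = false -> j < size bs ->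
  (j == 0) = ~~ nth false bs j && (rank bs j == 0).
Proof.
case: bs => // b0 bs /= ->; case: j => [|j] //= hj; rewrite /rank /=.
by case: (nth false bs j).
Qed.

Section SumOverMarks.
Variables (T : Type) (idx : T) (op : Monoid.com_law idx).

Lemma sum_marks (bs : seq bool) (G : bool -> nat -> T) :
  \big[op/idx]_(0 <= j < size bs) G (nth false bs j) (rank bs j) =
  op (\big[op/idx]_(0 <= i < count_mem false bs) G false i)
     (\big[op/idx]_(0 <= i < count_mem true bs) G true i).
Proof.
rewrite /index_iota !subn0.
elim/last_ind: bs => [|bs c IH]; first by rewrite !big_nil Monoid.mulm1.
rewrite size_rcons -addn1 iotaD big_cat /= big_seq1 add0n.
rewrite (eq_big_seq (fun j => G (nth false bs j) (rank bs j))); last first.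
  move=> j; rewrite mem_iota add0n => /andP [_ hj].
  by rewrite /rank nth_rcons hj -cats1 takel_cat // ltnW.
rewrite IH /rank nth_rcons ltnn eqxx -cats1 take_size_cat // !count_cat /=.
case: c; rewrite /= !addn0 iotaD big_cat big_seq1 add0n.
  by rewrite Monoid.mulmA.
by rewrite -!Monoid.mulmA; congr (op _ _); exact: Monoid.mulmC.
Qed.

End SumOverMarks.

Lemma sum_ordered_pairs (d : nat -> nat -> nat) N :
  (forall u v, d u v = d v u) -> (forall u, d u u = 0) ->
  \sum_(0 <= u < N) \sum_(0 <= v < N) d u v = 2 * \sum_(0 <= v < N) \sum_(0 <= u < v) d u v.
Proof.
move=> dC d0; elim: N => [|N IH]; first by rewrite !big_geq.
rewrite [in RHS]big_nat_recr //= mulnDr -IH big_nat_recr //= big_nat_recr //= d0 addn0.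
rewrite (eq_bigr (fun u => \sum_(0 <= v < N) d u v + d u N)); last first.
  by move=> u _; rewrite big_nat_recr.
by rewrite big_split /= (eq_bigr _ (fun v _ => dC N v)); ring.
Qed.

Lemma sum_cross (f g : nat -> nat) a b :
  \sum_(0 <= i < a) \sum_(0 <= j < b) (f i + g j) =
  b * \sum_(0 <= i < a) f i + a * \sum_(0 <= j < b) g j.
Proof.
rewrite (eq_bigr (fun i => b * f i + \sum_(0 <= j < b) g j)); last first.
  by move=> i _; rewrite big_split /= sum_nat_const_nat subn0 mulnC.
by rewrite big_split /= -big_distrr /= sum_nat_const_nat subn0 mulnC.
Qed.

(* A split state (bs, s1, s2): the marks of the vertices and the parent
   sequences of the two parts. *)
Definition split_state : Type := seq bool * seq nat * seq nat.

Definition marks (st : split_state) : seq bool := st.1.1.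

Definition part (st : split_state) (c : bool) : seq nat := if c then st.2 else st.1.2.

Definition push (st : split_state) (c : bool) (i : nat) : split_state :=
  (rcons (marks st) c,
   if c then part st false else rcons (part st false) i,
   if c then rcons (part st true) i else part st true).

(* A new vertex attached to j inherits the mark of j. *)
Definition split_step (st : split_state) (j : nat) : split_state :=
  push st (nth false (marks st) j) (rank (marks st) j).

(* Vertices 0 and 1 start the two parts, as single-vertex trees. *)
Definition split_tree (s : seq nat) : split_state :=
  foldl split_step ([:: false; true], [::], [::]) (behead s).

Lemma split_tree_rcons s j : s != [::] -> split_tree (rcons s j) = split_step (split_tree s) j.
Proof. by case: s => // x r _; rewrite /split_tree /= foldl_rcons. Qed.

(* The depth in the whole tree of the vertex of rank i in part c. *)
Definition vdepth (st : split_state) (c : bool) (i : nat) : nat := depth (part st c) i + c.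

Record splits (s : seq nat) (st : split_state) : Prop := Splits {
  splits_tree : forall c, tree_seq (part st c);
  splits_size : size (marks st) = nverts s;
  splits_nverts : forall c, nverts (part st c) = count_mem c (marks st);
  splits_depth : forall u, u < nverts s ->
    depth s u = vdepth st (nth false (marks st) u) (rank (marks st) u);
  splits_dist : forall u v, u < nverts s -> v < nverts s ->
    dist s u v =
    if nth false (marks st) u == nth false (marks st) v
    then dist (part st (nth false (marks st) u)) (rank (marks st) u) (rank (marks st) v)
    else depth s u + depth s v;
  splits_anc1 : forall u, u < nverts s -> (1 \in anc s u) = nth false (marks st) u }.

Arguments splits_tree {s st}.
Arguments splits_size {s st}.
Arguments splits_nverts {s st}.
Arguments splits_depth {s st}.
Arguments splits_dist {s st}.
Arguments splits_anc1 {s st}.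

Lemma splits_base : splits [:: 0] ([:: false; true], [::], [::]).
Proof.
split => //.
- by case=> i.
- by case.
- by case=> [|[|u]].
- by case=> [|[|u]] // [|[|v]].
- by case=> [|[|u]].
Qed.

Section SplitStep.
Variables (s : seq nat) (st : split_state) (j : nat).
Hypotheses (hs : tree_seq s) (hj : j <= size s) (s_gt0 : 0 < size s) (hst : splits s st).

Local Notation bs := (marks st).
Local Notation c := (nth false (marks st) j).
Local Notation i := (rank (marks st) j).
Local Notation st' := (split_step st j).

Lemma marks_step : marks st' = rcons bs c.
Proof. by []. Qed.

Lemma part_step b : part st' b = if b == c then rcons (part st b) i else part st b.
Proof. by rewrite /split_step /push /part /=; case: b; case: (nth false _ j). Qed.

Lemma size_marks : size bs = (size s).+1.
Proof. exact: splits_size hst. Qed.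

Lemma nth_step_old u : u <= size s -> nth false (rcons bs c) u = nth false bs u.
Proof. by move=> hu; rewrite nth_rcons size_marks ltnS hu. Qed.

Lemma rank_step_old u : u <= size s -> rank (rcons bs c) u = rank bs u.
Proof.
move=> hu; rewrite /rank nth_step_old // -cats1 takel_cat // size_marks.
exact: ltnW.
Qed.

Lemma nth_step_new : nth false (rcons bs c) (size s).+1 = c.
Proof. by rewrite nth_rcons size_marks ltnn eqxx. Qed.

Lemma rank_step_new : rank (rcons bs c) (size s).+1 = (size (part st c)).+1.
Proof.
by rewrite /rank nth_step_new -size_marks -cats1 take_size_cat // -(splits_nverts hst).
Qed.

Lemma rank_le u : u <= size s -> rank bs u <= size (part st (nth false bs u)).
Proof.
move=> hu; rewrite -ltnS -/(nverts _) (splits_nverts hst).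
by apply: rank_lt; rewrite size_marks.
Qed.

Lemma rank_le_step : i <= size (part st c).
Proof. exact: rank_le. Qed.

Lemma depth_part_old b k : k <= size (part st b) -> depth (part st' b) k = depth (part st b) k.
Proof.
move=> hk; rewrite part_step; case: eqP => // _.
by rewrite depth_rcons_old //; apply: (splits_tree hst).
Qed.

Lemma dist_part_old b k l : k <= size (part st b) -> l <= size (part st b) ->
  dist (part st' b) k l = dist (part st b) k l.
Proof.
move=> hk hl; rewrite part_step; case: eqP => // _.
by rewrite dist_rcons_old //; apply: (splits_tree hst).
Qed.

Lemma vdepth_step_old u : u <= size s ->
  vdepth st' (nth false bs u) (rank bs u) = vdepth st (nth false bs u) (rank bs u).
Proof. by move=> hu; rewrite /vdepth depth_part_old // rank_le. Qed.

Lemma vdepth_step_new : vdepth st' c (size (part st c)).+1 = (vdepth st c i).+1.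
Proof.
by rewrite /vdepth part_step eqxx depth_rcons_new ?rank_le_step //; apply: (splits_tree hst).
Qed.

Lemma dist_part_new k : k <= size (part st c) ->
  dist (part st' c) k (size (part st c)).+1 = (dist (part st c) k i).+1.
Proof.
by move=> hk; rewrite part_step eqxx dist_rcons_new ?rank_le_step //; apply: (splits_tree hst).
Qed.

Lemma old_or_new u : u < nverts (rcons s j) -> u <= size s \/ u = (size s).+1.
Proof. by rewrite /nverts size_rcons; lia. Qed.

Lemma depth_step u : u < nverts (rcons s j) ->
  depth (rcons s j) u = vdepth st' (nth false (marks st') u) (rank (marks st') u).
Proof.
rewrite marks_step => /old_or_new [hu|->].
  by rewrite depth_rcons_old // nth_step_old // rank_step_old // vdepth_step_old // (splits_depth hst).
by rewrite depth_rcons_new // nth_step_new rank_step_new vdepth_step_new (splits_depth hst).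
Qed.

Lemma dist_step u v : u < nverts (rcons s j) -> v < nverts (rcons s j) ->
  dist (rcons s j) u v =
  if nth false (marks st') u == nth false (marks st') v
  then dist (part st' (nth false (marks st') u)) (rank (marks st') u) (rank (marks st') v)
  else depth (rcons s j) u + depth (rcons s j) v.
Proof.
move=> hu hv; wlog huv : u v hu hv / u <= v.
  move=> H; case: (leqP u v) => [|/ltnW] huv; first exact: H.
  rewrite dist_sym H // eq_sym; case: eqP => [->|_]; [exact: dist_sym|exact: addnC].
rewrite marks_step; case: (old_or_new v hv) => [hv'|->].
  have hu' : u <= size s by lia.
  rewrite dist_rcons_old // !nth_step_old // !rank_step_old // !depth_rcons_old //.
  rewrite (splits_dist hst) ?ltnS //; case: eqP => // e.
  by rewrite dist_part_old ?rank_le // e rank_le.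
case: (old_or_new u hu) => [hu'|->]; last by rewrite !dist_refl eqxx.
rewrite dist_rcons_new // nth_step_old // nth_step_new rank_step_old // rank_step_new.
rewrite (splits_dist hst) ?ltnS //; case: eqP => [e|_].
  by rewrite e dist_part_new // -e rank_le.
by rewrite depth_rcons_old // depth_rcons_new // addnS.
Qed.

Lemma anc1_step u : u < nverts (rcons s j) ->
  (1 \in anc (rcons s j) u) = nth false (marks st') u.
Proof.
rewrite marks_step => /old_or_new [hu|->].
  by rewrite anc_rcons_old // nth_step_old // (splits_anc1 hst).
rewrite anc_rcons_new // nth_step_new in_cons (splits_anc1 hst) ?ltnS //.
by case: (size s) s_gt0.
Qed.

Lemma splits_step : splits (rcons s j) st'.
Proof.
split; [move=> b| |move=> b|exact: depth_step|exact: dist_step|exact: anc1_step].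
- rewrite part_step; case: eqP => [->|_]; last exact: (splits_tree hst).
  exact: tree_seq_rcons (splits_tree hst c) rank_le_step.
- by rewrite marks_step size_rcons size_marks /nverts size_rcons.
- rewrite part_step marks_step count_rcons -(splits_nverts hst) /=.
  by rewrite eq_sym; case: eqP => _; rewrite /nverts ?size_rcons ?addn1 ?addn0.
Qed.

End SplitStep.

Lemma splits_split_tree {k s} : s \in trees_aux k.+1 -> splits s (split_tree s).
Proof.
elim: k s => [|k IH] _ /trees_aux_rcons [s [j [hs hj ->]]].
  by move: hs hj; rewrite inE leqn0 => /eqP -> /eqP ->; exact: splits_base.
have [hsz htree] := mem_trees_aux hs.
rewrite split_tree_rcons -?size_eq0 ?hsz //.
by apply: splits_step; rewrite ?hsz //; exact: IH.
Qed.

Section SplitStatistics.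
Context {s : seq nat} {st : split_state}.
Hypothesis hst : splits s st.

Local Notation bs := (marks st).

Lemma nverts_marks : nverts s = size bs.
Proof. by rewrite (splits_size hst). Qed.

Lemma sum_vdepth c :
  \sum_(0 <= k < count_mem c bs) vdepth st c k = Tlen (part st c) + count_mem c bs * c.
Proof. by rewrite -(splits_nverts hst) big_split /= sum_nat_const_nat subn0. Qed.

Lemma Tlen_splits :
  Tlen s = Tlen (part st false) + Tlen (part st true) + count_mem true bs.
Proof.
rewrite /Tlen nverts_marks (eq_big_nat _ _ (F2 := fun u => vdepth st (nth false bs u) (rank bs u))).
  by rewrite (@sum_marks _ _ addn) /= !sum_vdepth muln0 muln1 addn0 addnA.
by move=> u /andP [_ hu]; rewrite (splits_depth hst) // nverts_marks.
Qed.

(* Twice the Wiener index is the sum of the distances over ordered pairs;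
   pairs within a part give its Wiener index, pairs across the cut give sums
   of depths. *)
Lemma Wien_splits :
  Wien s = Wien (part st false) + count_mem true bs * Tlen (part st false)
         + Wien (part st true) + count_mem false bs * Tlen (part st true)
         + count_mem true bs * count_mem false bs.
Proof.
set a := count_mem false bs; set m := count_mem true bs.
pose G b r c k := if b == c then dist (part st c) r k else vdepth st b r + vdepth st c k.
have pairs u v : u < size bs -> v < size bs ->
    dist s u v = G (nth false bs u) (rank bs u) (nth false bs v) (rank bs v).
  move=> hu hv; rewrite -nverts_marks in hu hv.
  rewrite (splits_dist hst) // /G; case: eqP => [->|_] //.
  by rewrite !(splits_depth hst).
have Wien_part c : 2 * Wien (part st c) =
    \sum_(0 <= k < count_mem c bs) \sum_(0 <= i < count_mem c bs) dist (part st c) k i.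
  by rewrite -(splits_nverts hst) sum_ordered_pairs //; [exact: dist_sym|exact: dist_refl].
apply/eqP; rewrite -(eqn_pmul2l (isT : 0 < 2)) -sum_ordered_pairs; last 2 first.
- exact: dist_sym.
- exact: dist_refl.
rewrite nverts_marks (eq_big_nat _ _ (F2 := fun u =>
   \sum_(0 <= i < a) G (nth false bs u) (rank bs u) false i +
   \sum_(0 <= i < m) G (nth false bs u) (rank bs u) true i)); last first.
  move=> u /andP [_ hu]; rewrite -(@sum_marks _ _ addn); apply: eq_big_nat => v /andP [_ hv].
  exact: pairs.
rewrite (@sum_marks _ _ addn bs (fun b r =>
  \sum_(0 <= i < a) G b r false i + \sum_(0 <= i < m) G b r true i)).
rewrite /G /= !big_split /= !sum_cross -/a -/m -!Wien_part !sum_vdepth.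
by apply/eqP; rewrite /= -/a -/m !muln0 !muln1 !addn0; ring.
Qed.

Lemma subsize1_splits : subsize1 s = count_mem true bs.
Proof.
rewrite /subsize1 -[in RHS](mkseq_nth false bs) /mkseq count_map nverts_marks.
apply: eq_in_count => v; rewrite mem_iota add0n => /andP [_ hv] /=.
by rewrite eqb_id (splits_anc1 hst) // nverts_marks.
Qed.

End SplitStatistics.

Local Open Scope ring_scope.

Lemma sum_select (R : pzSemiRingType) (T : eqType) (ps : seq T) (f : T -> nat)
    (c : T -> R) (X : nat -> R) lo hi :
  (forall p, p \in ps -> lo <= f p < hi)%N ->
  \sum_(lo <= m < hi) (\sum_(p <- ps) c p * (f p == m)%:R) * X m =
  \sum_(p <- ps) c p * X (f p).
Proof.
move=> hf; under eq_bigr do rewrite mulr_suml; rewrite exchange_big /=.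
apply: eq_big_seq => p hp; rewrite (bigD1_seq (f p)) ?mem_index_iota ?hf ?iota_uniq //=.
rewrite eqxx mulr1 big1 ?addr0 // => m /negPf; rewrite eq_sym => ->.
by rewrite mulr0 mul0r.
Qed.

Section HoppeWeight.
Context {R : realFieldType} {w : R}.
Hypothesis w_gt0 : 0 < w.

Lemma weight_rcons s j :
  weight w (rcons s j) = weight w s * ((if j == 0%N then w else 1) / (w + (size s)%:R)).
Proof.
rewrite /weight size_rcons big_ord_recr /= nth_rcons ltnn eqxx.
congr (_ * _); last by case: (j == 0%N).
by apply: eq_bigr => i _; rewrite nth_rcons ltn_ord.
Qed.

Lemma weight_denom_neq0 k : w + k%:R != 0.
Proof. by rewrite lt0r_neq0 // ltr_wpDr. Qed.

(* The growth step of the Hoppe tree: vertex k + 1 is attached to the root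
   with weight w and to each other vertex with weight 1, out of w + k. *)
Lemma sum_trees_extend k (F : seq nat -> R) :
  (w + k%:R) * \sum_(s <- trees_aux k.+1) weight w s * F s =
  \sum_(s <- trees_aux k) weight w s *
     \sum_(0 <= i < k.+1) (if i == 0%N then w else 1) * F (rcons s i).
Proof.
rewrite big_trees_aux mulr_sumr; apply: eq_big_seq => s /mem_trees_aux [hsz _].
rewrite !mulr_sumr; apply: eq_bigr => i _; rewrite weight_rcons hsz.
by field; rewrite weight_denom_neq0.
Qed.

Lemma weight_sum k : \sum_(s <- trees_aux k) weight w s = 1.
Proof.
elim: k => [|k IH]; first by rewrite big_seq1 /weight big_ord0.
have attach : \sum_(0 <= i < k.+1) (if i == 0%N then w else 1) * 1 = w + k%:R.
  rewrite big_ltn // eqxx mulr1 big_nat_cond (eq_bigr (fun=> 1)).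
    by rewrite -big_nat_cond sumr_const_nat subSS subn0.
  by case=> [|i] //=; rewrite mulr1.
apply: (mulfI (weight_denom_neq0 k)); rewrite mulr1.
transitivity ((w + k%:R) * \sum_(s <- trees_aux k.+1) weight w s * (fun=> 1) s).
  by congr (_ * _); apply: eq_bigr => s _; rewrite mulr1.
rewrite sum_trees_extend (eq_bigr (fun s => weight w s * (w + k%:R))) => [|s _].
  by rewrite -big_distrl /= IH mul1r.
by rewrite attach.
Qed.

End HoppeWeight.

Section MarkLaw.
Context {R : realFieldType} {theta : R}.
Hypothesis theta_gt0 : 0 < theta.

(* Mean of H(T1, T2) for independent T1 ~ Hoppe tree with parameter theta on
   a vertices and T2 ~ random recursive tree on m vertices. *)
Definition mean_pair (a m : nat) (H : seq nat -> seq nat -> R) : R :=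
  \sum_(s1 <- trees_aux a.-1) weight theta s1 * \sum_(s2 <- trees_aux m.-1) weight 1 s2 * H s1 s2.

Lemma eq_mean_pair {a m F G} : (forall s1 s2, F s1 s2 = G s1 s2) ->
  mean_pair a m F = mean_pair a m G.
Proof.
by move=> FG; apply: eq_bigr => s1 _; congr (_ * _); apply: eq_bigr => s2 _; rewrite FG.
Qed.

Lemma mean_pairD a m F G :
  mean_pair a m (fun s1 s2 => F s1 s2 + G s1 s2) = mean_pair a m F + mean_pair a m G.
Proof.
rewrite -big_split; apply: eq_bigr => s1 _ /=; rewrite -mulrDr -big_split /=.
by congr (_ * _); apply: eq_bigr => s2 _; rewrite mulrDr.
Qed.

Lemma mean_pair_const a m c : mean_pair a m (fun _ _ => c) = c.
Proof.
have inner : \sum_(s2 <- trees_aux m.-1) weight 1 s2 * c = c.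
  by rewrite -big_distrl /= weight_sum ?ltr01 // mul1r.
rewrite /mean_pair (eq_bigr _ (fun s1 _ => congr1 _ inner)).
by rewrite -big_distrl /= weight_sum // mul1r.
Qed.

Lemma mean_pair_grow1 {a m} F : (0 < a)%N ->
  mean_pair a m (fun s1 s2 => \sum_(0 <= i < a) (if i == 0%N then theta else 1) * F (rcons s1 i) s2)
  = (theta + a.-1%:R) * mean_pair a.+1 m F.
Proof.
case: a => // a _; rewrite /mean_pair /= sum_trees_extend //.
apply: eq_bigr => s1 _; congr (_ * _).
under eq_bigr do rewrite mulr_sumr; rewrite exchange_big /=.
by apply: eq_bigr => i _; rewrite mulr_sumr; apply: eq_bigr => s2 _; rewrite mulrCA.
Qed.

Lemma mean_pair_grow2 {a m} F : (0 < m)%N ->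
  mean_pair a m (fun s1 s2 => \sum_(0 <= i < m) F s1 (rcons s2 i)) = m%:R * mean_pair a m.+1 F.
Proof.
case: m => // m _; rewrite /mean_pair /= mulr_sumr; apply: eq_bigr => s1 _.
rewrite mulrCA -natr1 addrC sum_trees_extend ?ltr01 //; congr (_ * _).
apply: eq_bigr => s2 _; congr (_ * _).
by apply: eq_bigr => i _; rewrite if_same mul1r.
Qed.

(* One step of the law of the marks: the next vertex joins the subtree of
   vertex 1 with probability (number of its vertices) / (theta + N - 1), and
   the part of the root otherwise. *)
Definition mark_step (p : seq bool * R) : seq (seq bool * R) :=
  [:: (rcons p.1 false,
       p.2 * ((theta + (count_mem false p.1).-1%:R) / (theta + (size p.1).-1%:R)));
      (rcons p.1 true, p.2 * ((count_mem true p.1)%:R / (theta + (size p.1).-1%:R)))].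

(* Law of the marks of a Hoppe tree with k + 2 vertices, as a list of
   (mark sequence, probability) pairs. *)
Fixpoint mark_law (k : nat) : seq (seq bool * R) :=
  if k is k'.+1 then flatten (map mark_step (mark_law k')) else [:: ([:: false; true], 1)].

Lemma mark_lawP k p : p \in mark_law k ->
  [/\ size p.1 = k.+2, (0 < count_mem false p.1)%N, (0 < count_mem true p.1)%N
    & nth false p.1 0 = false].
Proof.
elim: k p => [|k IH] p; first by rewrite inE => /eqP ->.
case/flattenP=> _ /mapP [q /IH [h1 h2 h3 h4] ->].
rewrite !inE => /orP [] /eqP -> /=; rewrite size_rcons nth_rcons h1 !count_rcons h4.
  by split; rewrite ?addn_gt0 ?h2 ?h3.
by split; rewrite ?addn_gt0 ?h2 ?h3 ?orbT.
Qed.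

(* Given the marks, attaching the new vertex with the Hoppe weights is a Hoppe
   step in the part of the root plus a uniform step in the subtree of 1. *)
Lemma sum_split_step (bs : seq bool) s1 s2 (H : split_state -> R) :
  nth false bs 0 = false ->
  \sum_(0 <= j < size bs) (if j == 0%N then theta else 1) * H (split_step (bs, s1, s2) j) =
  \sum_(0 <= i < count_mem false bs)
     (if i == 0%N then theta else 1) * H (rcons bs false, rcons s1 i, s2)
  + \sum_(0 <= i < count_mem true bs) H (rcons bs true, s1, rcons s2 i).
Proof.
move=> h0.
pose G c i := (if ~~ c && (i == 0%N) then theta else 1) * H (push (bs, s1, s2) c i).
rewrite (eq_big_nat _ _ (F2 := fun j => G (nth false bs j) (rank bs j))); last first.
  by move=> j /andP [_ hj]; rewrite (eq0_rank _ _ h0).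
rewrite (@sum_marks _ _ +%R bs G) /G /=; congr (_ + _).
by apply: eq_bigr => i _; rewrite mul1r.
Qed.

Lemma split_sum k (H : split_state -> R) :
  \sum_(s <- trees_aux k.+1) weight theta s * H (split_tree s) =
  \sum_(p <- mark_law k) p.2 *
     mean_pair (count_mem false p.1) (count_mem true p.1) (fun s1 s2 => H (p.1, s1, s2)).
Proof.
elim: k H => [|k IH] H.
  rewrite /= !big_seq1 /mean_pair /= !big_seq1 /weight big_ord1 !big_ord0 /=.
  by rewrite addr0 divff ?lt0r_neq0 // !mul1r.
have d0 := weight_denom_neq0 theta_gt0 k.+1.
pose H' st := \sum_(0 <= j < k.+2) (if j == 0%N then theta else 1) * H (split_step st j).
apply: (mulfI d0); rewrite sum_trees_extend //.
transitivity (\sum_(s <- trees_aux k.+1) weight theta s * H' (split_tree s)).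
  apply: eq_big_seq => s /mem_trees_aux [hsz _]; congr (_ * _); apply: eq_bigr => j _.
  by rewrite split_tree_rcons // -size_eq0 hsz.
rewrite IH mulr_sumr big_flatten big_map; apply: eq_big_seq => -[bs c] /mark_lawP [/= hsz ha hm h0].
rewrite big_cons big_seq1 /= !count_rcons /= addn0 !addn1.
have step_split s1 s2 : H' (bs, s1, s2) =
    \sum_(0 <= i < count_mem false bs)
       (if i == 0%N then theta else 1) * H (rcons bs false, rcons s1 i, s2)
    + \sum_(0 <= i < count_mem true bs) H (rcons bs true, s1, rcons s2 i).
  by rewrite /H' -hsz sum_split_step.
rewrite (eq_mean_pair step_split) mean_pairD.
rewrite (mean_pair_grow1 (fun s1 s2 => H (rcons bs false, s1, s2)) ha).
rewrite (mean_pair_grow2 (fun s1 s2 => H (rcons bs true, s1, s2)) hm) hsz /= addn0.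
by field; rewrite nat1r.
Qed.

End MarkLaw.

Arguments mean_pair {R} theta a m H.
Arguments mark_law {R} theta k.

Section Recursion.
Context {R : realFieldType} {theta : R}.
Hypothesis theta_gt0 : 0 < theta.

Definition wt_event (n w t m : nat) (s1 s2 : seq nat) : R :=
  ((Wien s1 + m * Tlen s1 + Wien s2 + (n - m) * Tlen s2 + m * (n - m) == w)%N
   && (Tlen s1 + Tlen s2 + m == t)%N)%:R.

Lemma lawWT_split k w t :
  lawWT theta k.+2 w t =
  \sum_(s <- trees_aux k.+1) weight theta s *
    wt_event k.+2 w t (count_mem true (marks (split_tree s)))
      (part (split_tree s) false) (part (split_tree s) true).
Proof.
apply: eq_big_seq => s hs; congr (_ * _); have hst := splits_split_tree hs.
have [hsz _] := mem_trees_aux hs.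
have hN : k.+2 = size (marks (split_tree s)) by rewrite (splits_size hst) /nverts hsz.
by rewrite /wt_event (Wien_splits hst) (Tlen_splits hst) hN -count_marks addnK.
Qed.

Lemma lawK_marks k m :
  lawK theta k.+2 m = \sum_(p <- mark_law theta k) p.2 * (count_mem true p.1 == m)%:R.
Proof.
rewrite /lawK; transitivity (\sum_(s <- trees_aux k.+1) weight theta s *
  (fun st => (count_mem true (marks st) == m)%:R) (split_tree s)).
  by apply: eq_big_seq => s hs; rewrite (subsize1_splits (splits_split_tree hs)).
rewrite (split_sum theta_gt0 k (fun st => (count_mem true (marks st) == m)%:R)).
by apply: eq_bigr => p _; rewrite mean_pair_const.
Qed.

Lemma mean_pairE a m (H : seq nat -> seq nat -> R) :
  mean_pair theta a m H =
  \sum_(s1 <- trees a) \sum_(s2 <- trees m) weight theta s1 * weight 1 s2 * H s1 s2.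
Proof. by apply: eq_bigr => s1 _; rewrite mulr_sumr; under eq_bigr do rewrite mulrA. Qed.

End Recursion.

Theorem mainTheorem10 (R : realFieldType) (theta : R) (n : nat) :
  0 < theta -> (2 <= n)%N ->
  forall w t : nat,
    lawWT theta n w t =
    \sum_(1 <= m < n)
      lawK theta n m *
      \sum_(s1 <- trees (n - m)) \sum_(s2 <- trees m)
        weight theta s1 * weight 1 s2 *
        ((Wien s1 + m * Tlen s1 + Wien s2 + (n - m) * Tlen s2 + m * (n - m) == w)%N
         && (Tlen s1 + Tlen s2 + m == t)%N)%:R.
Proof.
move=> theta_gt0 n_ge2 w t; case: n n_ge2 => [|[|k]] // _.
rewrite lawWT_split (split_sum theta_gt0 k (fun st =>
  wt_event k.+2 w t (count_mem true (marks st)) (part st false) (part st true))).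
under [RHS]eq_bigr do rewrite lawK_marks //.
rewrite (@sum_select _ _ _ (fun p => count_mem true p.1)); last first.
  move=> p /mark_lawP [hsz ha hm _]; rewrite hm -hsz -count_marks /=.
  by rewrite -[X in (X < _)%N]add0n ltn_add2r.
apply: eq_big_seq => p /mark_lawP [hsz _ _ _]; congr (_ * _).
by rewrite mean_pairE -hsz -count_marks /wt_event /= addnK.
Qed.
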